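(* Let $n \geq 1$ and $0 \le k \le n$. The number of Grassmannian permutations of $[n]$ with exactly $k$ fixed points is $1$ if $k = n$, $0$ if $k = n-1$, and $(k+1)2^{n-k-2}$ if $0 \le k \le n-2$.
   Context: A permutation $\pi = \pi_1\cdots\pi_n$ of $[n]=\{1,\dots,n\}$ (written in one-line notation) is Grassmannian if it has at most one descent, i.e. at most one index $i$ with $\pi_i > \pi_{i+1}$. A fixed point of $\pi$ is an $i \in [n]$ with $\pi_i = i$. *)

From mathcomp Require Import all_boot all_fingroup.
Local Open Scope nat_scope.
Set Implicit Arguments. Unset Strict Implicit. Unset Printing Implicit Defensive.

(* Permutations of [n] are modelled as s : 'S_n acting on 'I_n = {0,...,n-1};
   the shift i <-> i+1 preserves descents and fixed points. *)

Definition descents n (s : 'S_n) : {set 'I_n} :=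
  [set i : 'I_n | [exists j : 'I_n, (val j == (val i).+1) && (s j < s i)]].

Definition ndes n (s : 'S_n) : nat := #|descents s|.

Definition grassmannian n (s : 'S_n) : bool := ndes s <= 1.

Definition nfix n (s : 'S_n) : nat := #|[set i : 'I_n | s i == i]|.

Definition grass_fix_count (n k : nat) : nat :=
  #|[set s : 'S_n | grassmannian s && (nfix s == k)]|.

From mathcomp Require Import all_boot all_fingroup zify.
Set Implicit Arguments. Unset Strict Implicit. Unset Printing Implicit Defensive.

(* A permutation whose only descent is at position c - 1 is increasing on
   [0, c) and on [c, n), so it is the shuffle of the set A of its values on
   [0, c): A in increasing order followed by the complement of A in
   increasing order.  Every shuffle is Grassmannian, and a non-identity
   shuffle has its descent exactly at position #|A| - 1, which recovers #|A|
   and hence A.  A value x is a fixed point of the shuffle of A iff x lies in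
   A together with everything below it, or lies outside A together with
   everything above it; so the number of fixed points is lead A + trail A,
   the length of the initial run of A plus that of the final run of its
   complement.  For r + t + 2 <= n, the sets with lead r and trail t are
   those that contain [0, r) and n - t - 1 and avoid r and the last t
   values, the other n - r - t - 2 values being free; summing over r + t = k
   gives (k + 1) 2^(n-k-2).  Since a non-identity permutation moves at least
   two points, no non-identity shuffle has more than n - 2 fixed points. *)

Lemma count_iota_itv a b m : count (fun z => a <= z < b) (iota 0 m) = minn m b - a.
Proof.
elim: m => [|m IHm]; first by rewrite minnC.
rewrite -addn1 iotaD count_cat IHm /= addn0 add0n.
by case: (leqP a m) => ?; case: (ltnP m b) => ? /=; lia.
Qed.

Lemma card_ord_itv n a b : b <= n -> #|[set z : 'I_n | a <= z < b]| = b - a.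
Proof.
move=> le_bn; rewrite -[b in RHS](minn_idPr le_bn) -count_iota_itv -(val_enum_ord n).
rewrite count_map cardsE cardE -size_filter /enum_mem /= -enumT; congr size.
by rewrite -filter_predI; apply: eq_filter => z; rewrite /= !inE andbT.
Qed.

Lemma card_ord_lt n (x : 'I_n) : #|[set z : 'I_n | z < x]| = x.
Proof.
rewrite -[RHS]subn0 -(card_ord_itv 0 (ltnW (ltn_ord x))).
by apply: eq_card => z; rewrite !inE.
Qed.

Lemma card_below_lt n (B : {set 'I_n}) (x : 'I_n) :
  x \in B -> #|[set z in B | z < x]| < #|B|.
Proof.
move=> Bx; apply: proper_card; apply/properP; split; last by exists x; rewrite // inE ltnn andbF.
by apply/subsetP => z; rewrite inE => /andP[].
Qed.

Lemma card_below_mono n (B : {set 'I_n}) (x y : 'I_n) : y \in B -> y < x ->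
  #|[set z in B | z < y]| < #|[set z in B | z < x]|.
Proof.
move=> By lt_yx; apply: proper_card; apply/properP; split.
  by apply/subsetP => z; rewrite !inE => /andP[-> /ltn_trans]; apply.
by exists y; rewrite !inE ?By ?lt_yx ?ltnn.
Qed.

Section Shuffle.
Variables (n : nat) (A : {set 'I_n}).

(* The position of the value x in the shuffle of A. *)
Definition srank (x : 'I_n) : nat :=
  if x \in A then #|[set z in A | z < x]| else #|A| + #|[set z in ~: A | z < x]|.

Lemma srank_lt_card x : (srank x < #|A|) = (x \in A).
Proof.
by rewrite /srank; case: ifP => Ax; [rewrite card_below_lt | rewrite ltnNge leq_addr].
Qed.

Lemma srank_lt x : srank x < n.
Proof.
rewrite -[n in _ < n]card_ord -(cardsC A) /srank; case: ifP => Ax.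
  exact: leq_trans (card_below_lt Ax) (leq_addr _ _).
by rewrite ltn_add2l card_below_lt // inE Ax.
Qed.

Lemma srank_mono x y : (x \in A) = (y \in A) -> y < x -> srank y < srank x.
Proof.
move=> eqA lt_yx; rewrite /srank -eqA; case: ifP => Ax.
  by apply: card_below_mono; rewrite // -eqA.
by rewrite ltn_add2l card_below_mono // inE -eqA Ax.
Qed.

Lemma srank_inj : injective srank.
Proof.
move=> x y eq_xy; have eqA : (x \in A) = (y \in A) by rewrite -!srank_lt_card eq_xy.
apply: val_inj; case: (ltngtP x y) => // lt.
- by have := srank_mono (esym eqA) lt; rewrite eq_xy ltnn.
- by have := srank_mono eqA lt; rewrite eq_xy ltnn.
Qed.

Definition srank_ord x : 'I_n := Ordinal (srank_lt x).

Lemma srank_ord_inj : injective srank_ord.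
Proof. by move=> x y /(congr1 val) /srank_inj. Qed.

Definition shuffle : 'S_n := (perm srank_ord_inj)^-1.

Lemma shuffleP i x : (shuffle i == x) = (srank x == i).
Proof.
rewrite /shuffle -(inj_eq (@perm_inj _ (perm srank_ord_inj))) permKV permE.
by rewrite eq_sym -val_eqE.
Qed.

Lemma srank_shuffle i : srank (shuffle i) = i.
Proof. by apply/eqP; rewrite -shuffleP. Qed.

Lemma shuffle_descent (i j : 'I_n) :
  j = i.+1 :> nat -> shuffle j < shuffle i -> j = #|A| :> nat.
Proof.
move=> ji lt_ji; have := (@srank_mono (shuffle i) (shuffle j))^~ lt_ji.
have := srank_lt_card (shuffle i); have := srank_lt_card (shuffle j).
rewrite !srank_shuffle ji.
by case: (shuffle i \in A); case: (shuffle j \in A) => ? ? mono;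
  try have := mono erefl; lia.
Qed.

End Shuffle.

Lemma descentsP n (s : 'S_n) (i : 'I_n) :
  reflect (exists2 j : 'I_n, j = i.+1 :> nat & s j < s i) (i \in descents s).
Proof.
rewrite inE; apply: (iffP existsP) => [[j /andP[/eqP ji lt_ji]]|[j ji lt_ji]].
  by exists j.
by exists j; rewrite lt_ji andbT; apply/eqP.
Qed.

Lemma grassmannian_shuffle n (A : {set 'I_n}) : grassmannian (shuffle A).
Proof.
apply/card_le1_eqP => i1 i2 /descentsP[j1 e1 /(shuffle_descent e1)].
by rewrite e1 => eq1 /descentsP[j2 e2 /(shuffle_descent e2)]; rewrite e2 -eq1 => /succn_inj/val_inj.
Qed.

Section Blocks.
Variables (n : nat) (s : 'S_n) (c : nat).
Hypothesis descent_at_c : forall i j : 'I_n, j = i.+1 :> nat -> s j < s i -> j = c :> nat.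

Lemma perm_incr_block (i j : 'I_n) : i < j -> (i < c) = (j < c) -> s i < s j.
Proof.
(* [f] extends [s] to nat so that [homo_ltn_in] applies. *)
pose f k := if insub k is Some x then val (s x) else 0.
have fE (x : 'I_n) : f x = s x by rewrite /f valK.
pose D := [pred k | (k < n) && ((k < c) == (i < c))].
have mono : {in D &, {homo f : k l / k < l}}.
  apply: homo_ltn_in => [|k l|k]; first exact: ltn_trans.
  - move=> /andP[_ /eqP kc] /andP[ln /eqP lc] m /andP[km ml].
    rewrite /D inE (ltn_trans ml ln) /=; apply/eqP; move: kc lc; case: (i < c); lia.
  - move=> /andP[kn /eqP kc] /andP[k1n /eqP k1c].
    rewrite (fE (Ordinal kn)) (fE (Ordinal k1n)).
    case: ltngtP => // [lt|/val_inj/perm_inj/(congr1 val)/=]; last lia.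
    have /= k1 := descent_at_c (erefl : val (Ordinal k1n) = (Ordinal kn).+1) lt.
    by move: kc k1c; rewrite -k1 ltnn; case: (k < c); lia.
move=> lt_ij eq_c; rewrite -!fE; apply: mono; rewrite // /D !inE ltn_ord ?eq_c eqxx //.
Qed.

Lemma perm_lt_block (i j : 'I_n) : (i < c) = (j < c) -> (s i < s j) = (i < j).
Proof.
move=> eq_c; case: (ltngtP i j) => [lt_ij|lt_ji|/val_inj->]; last by rewrite ltnn.
- exact: perm_incr_block.
- by apply/negbTE; rewrite -leqNgt ltnW // perm_incr_block.
Qed.

Lemma shuffle_blocks : c <= n -> s = shuffle [set x | (s^-1)%g x < c].
Proof.
move=> le_cn; set A := [set x | (s^-1)%g x < c].
have inA j : (s j \in A) = (j < c) by rewrite inE permK.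
have card_s (P : pred 'I_n) : #|[set x | P x]| = #|[set j | P (s j)]|.
  rewrite -(card_preimset [set x | P x] (@perm_inj _ s)).
  by apply: eq_card => j; rewrite !inE.
have cardA : #|A| = c.
  rewrite card_s -[RHS]subn0 -(card_ord_itv 0 le_cn).
  by apply: eq_card => j; rewrite !inE permK.
apply/permP => i; apply/esym/eqP; rewrite shuffleP /srank inA.
case: ltnP => [ic|ci].
  rewrite (card_s (fun z => (z \in A) && (z < s i))) -[X in _ == X](card_ord_lt i).
  apply/eqP/eq_card => j; rewrite !inE permK.
  by case: (ltnP j c) => jc /=; [rewrite perm_lt_block ?ic ?jc | apply/esym/negbTE; lia].
rewrite cardA (card_s (fun z => (z \in ~: A) && (z < s i))) -(subnKC ci) eqn_add2l.
rewrite -(card_ord_itv c (ltnW (ltn_ord i))); apply/eqP/eq_card => j; rewrite !inE permK.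
case: (ltnP j c) => jc /=; first by apply/esym/negbTE; lia.
by rewrite perm_lt_block // ltnNge jc ltnNge ci.
Qed.

End Blocks.

Lemma descents_eq0 n (s : 'S_n) : descents s = set0 -> s = 1%g.
Proof.
move=> no_des; have -> : s = shuffle [set x | (s^-1)%g x < 0].
  apply: shuffle_blocks => // i j ji lt_ji.
  have : i \in descents s by apply/descentsP; exists j.
  by rewrite no_des inE.
have -> : [set x : 'I_n | (s^-1)%g x < 0] = set0 by apply/setP => x; rewrite !inE.
apply/permP => i; apply/eqP; rewrite perm1 shuffleP /srank inE cards0 add0n.
by rewrite -[X in _ == X](card_ord_lt i); apply/eqP/eq_card => z; rewrite !inE.
Qed.

Lemma grassmannian_shuffleP n (s : 'S_n) : grassmannian s -> exists A, s = shuffle A.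
Proof.
move=> grass_s; suff [c le_cn des_c] : exists2 c, c <= n &
    forall i j : 'I_n, j = i.+1 :> nat -> s j < s i -> j = c :> nat.
  by exists [set x | (s^-1)%g x < c]; apply: shuffle_blocks.
move: grass_s; rewrite /grassmannian /ndes leq_eqVlt ltnS leqn0.
case/orP => [/cards1P[d des_d]|/eqP/cards0_eq no_des].
  exists d.+1 => [|i j ji lt_ji]; first exact: ltn_ord.
  have : i \in descents s by apply/descentsP; exists j.
  by rewrite des_d inE ji => /eqP->.
exists 0 => // i j ji lt_ji.
have : i \in descents s by apply/descentsP; exists j.
by rewrite no_des inE.
Qed.

Lemma shuffle_inj n (A B : {set 'I_n}) : shuffle A != 1%g -> shuffle A = shuffle B -> A = B.
Proof.
move=> ne1 eq_AB.
have [i /descentsP[j ji lt_ji]] : exists i, i \in descents (shuffle A).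
  by apply/set0Pn; apply: contra ne1 => /eqP/descents_eq0/eqP.
have cardAB : #|A| = #|B|.
  by rewrite -(shuffle_descent ji lt_ji); apply: (shuffle_descent ji); rewrite -eq_AB.
have srankAB x : srank A x = srank B x.
  by rewrite -[x](permKV (shuffle A)) srank_shuffle {2}eq_AB srank_shuffle.
by apply/setP => x; rewrite -srank_lt_card srankAB cardAB srank_lt_card.
Qed.

Lemma cards_eq0_forall (T : finType) (P : pred T) :
  (#|[set z | P z]| == 0) = [forall z, ~~ P z].
Proof.
rewrite cards_eq0; apply/eqP/forallP => [/setP eq0 z|noP].
  by have := eq0 z; rewrite !inE => ->.
by apply/setP => z; rewrite !inE (negbTE (noP z)).
Qed.

Lemma card_below_split n (A : {set 'I_n}) (x : 'I_n) :
  #|[set z in A | z < x]| + #|[set z in ~: A | z < x]| = x.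
Proof.
rewrite -[RHS](card_ord_lt x) -(cardsID A [set z : 'I_n | z < x]).
by congr (_ + _); apply: eq_card => z; rewrite !inE andbC.
Qed.

Section LeadTrail.
Variable n : nat.
Implicit Types (A : {set 'I_n}).

Definition lead A : nat := #|[set x in A | [forall z : 'I_n, (z < x) ==> (z \in A)]]|.

Definition rev_compl A : {set 'I_n} := [set x | rev_ord x \notin A].

Definition trail A : nat := lead (rev_compl A).

Lemma trailE A : trail A = #|[set x in ~: A | [forall z in A, z < x]]|.
Proof.
rewrite /trail /lead -[RHS](card_preimset _ (@rev_ord_inj n)); apply: eq_card => y.
rewrite !inE; case: (boolP (rev_ord y \in A)) => //= yA.
apply/forallP/forallP => all_in z; apply/implyP; have := ltn_ord y; have := ltn_ord z.
- move=> ? ? Az; have /negP : z != rev_ord y by apply: contraNneq yA => <-.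
  have := implyP (all_in (rev_ord z)); rewrite inE rev_ordK Az -val_eqE /=.
  move=> no_lt /eqP ne; case: (ltnP (n - z.+1) y) => [/no_lt//|]; lia.
- move=> ? ? zy; rewrite inE; apply: contraL zy => /(implyP (all_in (rev_ord z))) /=.
  lia.
Qed.

Lemma nfix_shuffle A : nfix (shuffle A) = lead A + trail A.
Proof.
rewrite /nfix (_ : [set i | _] = [set x | srank A x == x]); last first.
  by apply/setP => x; rewrite !inE shuffleP.
rewrite trailE -(cardsID A [set x | srank A x == x]); congr (_ + _).
all: apply: eq_card => x; rewrite !inE.
- rewrite andbC; case: (boolP (x \in A)) => //= Ax.
  rewrite /srank Ax -[X in _ == X](card_below_split A x) -[X in X == _]addn0 eqn_add2l.
  rewrite eq_sym cards_eq0_forall; apply: eq_forallb => z.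
  by rewrite !inE negb_and negbK orbC implybE.
- case: (boolP (x \in A)) => //= nAx; rewrite /srank (negbTE nAx).
  rewrite -[X in _ == X](card_below_split A x) eqn_add2r.
  rewrite -(cardsID [set z : 'I_n | z < x] A).
  rewrite (_ : A :&: _ = [set z in A | z < x]); last by apply/setP => z; rewrite !inE.
  rewrite -[X in _ == X]addn0 eqn_add2l (_ : A :\: _ = [set z in A | ~~ (z < x)]).
    by rewrite cards_eq0_forall; apply: eq_forallb => z; rewrite negb_and negbK implybE.
  by apply/setP => z; rewrite !inE andbC.
Qed.

End LeadTrail.

Section LeadPattern.
Variable n : nat.
Implicit Types (A : {set 'I_n}) (r : nat).

Definition lead_at A r := forall x : 'I_n, x <= r -> (x \in A) = (x < r).

Lemma lead_atE A r : r <= n -> lead_at A r -> lead A = r.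
Proof.
move=> le_rn leadAr; rewrite /lead -[RHS]subn0 -(card_ord_itv 0 le_rn).
apply: eq_card => x; rewrite !inE /=; case: (ltnP x r) => [lt_xr|le_rx].
  rewrite leadAr ?(ltnW lt_xr) // lt_xr; apply/forallP => z; apply/implyP => lt_zx.
  by rewrite leadAr ?(ltn_trans lt_zx) // ltnW // (ltn_trans lt_zx).
have lt_rn : r < n by apply: leq_trans (ltn_ord x).
apply/negbTE; rewrite negb_and -implybE; apply/implyP => Ax.
apply/forallPn; exists (Ordinal lt_rn); rewrite negb_imply leadAr //= ltnn andbT.
by rewrite ltn_neqAle le_rx andbT; apply: contraTneq Ax => eq_rx; rewrite leadAr -?eq_rx ?ltnn.
Qed.

Lemma exists_lead_at A : exists2 r, r <= n & lead_at A r.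
Proof.
pose missing r := (n <= r) || [exists x : 'I_n, (val x == r) && (x \notin A)].
have [|r miss_r min_r] := @ex_minnP missing; first by exists n; rewrite /missing leqnn.
exists r => [|x le_xr]; first by apply: min_r; rewrite /missing leqnn.
move: le_xr; rewrite leq_eqVlt => /orP[/eqP eq_xr|lt_xr].
  move: miss_r; rewrite /missing -eq_xr leqNgt ltn_ord ltnn /=.
  by case/existsP => y /andP[/eqP/val_inj-> /negbTE].
rewrite lt_xr; apply/negPn/negP => nAx.
suff /min_r : missing x by rewrite leqNgt lt_xr.
by apply/orP; right; apply/existsP; exists x; rewrite eqxx.
Qed.

Lemma lead_atP A r : r <= n -> reflect (lead_at A r) (lead A == r).
Proof.
move=> le_rn; apply: (iffP eqP) => [<-|]; last exact: lead_atE.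
by have [r' le_r'n leadAr'] := exists_lead_at A; rewrite (lead_atE le_r'n leadAr').
Qed.

End LeadPattern.

Section Patterns.
Variables (n r t : nat).

(* [rev_ord x] is n - 1 - x: the support is [0, r] together with the last
   t + 1 values, and the pattern is [0, r) together with n - t - 1. *)
Definition pattern_support : {set 'I_n} := [set x : 'I_n | (x <= r) || (rev_ord x <= t)].
Definition pattern_set : {set 'I_n} := [set x : 'I_n | (x < r) || (rev_ord x == t :> nat)].

Hypothesis room : r + t.+2 <= n.

Lemma lead_trail_pattern (A : {set 'I_n}) :
  (lead A == r) && (trail A == t) = (A :&: pattern_support == pattern_set).
Proof.
have le_rn : r <= n by lia.
have le_tn : t <= n by lia.
have far (x : 'I_n) : x <= r -> t < rev_ord x by rewrite /=; lia.
apply/andP/eqP => [[/(lead_atP _ le_rn) leadA /(lead_atP _ le_tn) trailA]|eqA].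
  apply/setP => x; rewrite !inE; case: (leqP x r) => [le_xr|lt_rx].
    by rewrite andbT leadA // (gtn_eqF (far x le_xr)) orbF.
  rewrite orFb ltnNge (ltnW lt_rx) /=; case: (leqP (rev_ord x) t) => [le_xt|lt_tx].
    have := trailA _ le_xt; rewrite inE rev_ordK ltn_neqAle le_xt andbT => /negb_inj->.
    by rewrite andbT.
  by rewrite andbF gtn_eqF.
have memA (x : 'I_n) : x \in pattern_support -> (x \in A) = (x \in pattern_set).
  by move=> Dx; rewrite -eqA inE Dx andbT.
split; apply/lead_atP => // x le_x.
  by rewrite memA ?inE ?le_x // (gtn_eqF (far x le_x)) orbF.
have lt_rx : r < rev_ord x by rewrite /=; lia.
rewrite inE memA ?inE ?rev_ordK ?le_x ?orbT // ltnNge (ltnW lt_rx) /=.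
by rewrite ltn_neqAle le_x andbT.
Qed.

End Patterns.

Lemma card_sets_trace (T : finType) (D E : {set T}) :
  E \subset D -> #|[set A : {set T} | A :&: D == E]| = 2 ^ #|~: D|.
Proof.
move=> /subsetP sub_ED; rewrite -card_powerset.
have memBE (B : {set T}) x : B \subset ~: D ->
    x \in B :|: E = if x \in D then x \in E else x \in B.
  move/subsetP/(_ x); rewrite !inE; case: (boolP (x \in D)) => [Dx|nDx] sub_B.
    by case: (boolP (x \in B)) => // /sub_B.
  by case: (boolP (x \in E)) => [/sub_ED|]; rewrite ?(negbTE nDx) ?orbT ?orbF.
have -> : [set A : {set T} | A :&: D == E] = [set B :|: E | B in powerset (~: D)].
  apply/setP => A; rewrite inE; apply/eqP/imsetP => [<-|[B]].
    exists (A :\: D); first by rewrite inE subDset setUCr subsetT.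
    by rewrite setUC setID.
  rewrite inE => sub_B ->; apply/setP => x; rewrite inE memBE //.
  case: (boolP (x \in D)) => [|nDx]; rewrite ?andbT ?andbF //.
  by apply/esym/negP => /sub_ED; apply/negP.
apply: card_in_imset => B1 B2; rewrite !inE => sub1 sub2 /setP eq12.
apply/setP => x; have := eq12 x; rewrite !memBE //.
case: (boolP (x \in D)) => // Dx _.
have notin (B : {set T}) : B \subset ~: D -> x \in B = false.
  by move/subsetP/(_ x); rewrite inE Dx; case: (x \in B) => // /(_ isT).
by rewrite !notin.
Qed.

Lemma card_lead_trail n r t : r + t.+2 <= n ->
  #|[set A : {set 'I_n} | (lead A == r) && (trail A == t)]| = 2 ^ (n - (r + t.+2)).
Proof.
move=> room; have sub_ED : pattern_set n r t \subset pattern_support n r t.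
  by apply/subsetP => x; rewrite !inE => /orP[/ltnW->|/eqP->]; rewrite ?leqnn ?orbT.
have card_compl : #|~: pattern_support n r t| = n - (r + t.+2).
  rewrite -[RHS](_ : n - t.+1 - r.+1 = _); last by lia.
  rewrite -(card_ord_itv r.+1 (leq_subr _ _)); apply: eq_card => x.
  by rewrite !inE /= negb_or -!ltnNge; have := ltn_ord x; lia.
rewrite -card_compl -(card_sets_trace sub_ED); apply: eq_card => A.
by rewrite !inE lead_trail_pattern.
Qed.

Lemma card_lead_add_trail n k : k.+2 <= n ->
  #|[set A : {set 'I_n} | lead A + trail A == k]| = k.+1 * 2 ^ (n - k.+2).
Proof.
move=> room; rewrite -sum1_card.
rewrite (partition_big (fun A => inord (lead A) : 'I_k.+1) predT) //=.
rewrite -[X in X * _]card_ord -sum_nat_const; apply: eq_bigr => r _.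
have room_r : r + (k - r).+2 <= n by have := ltn_ord r; lia.
rewrite sum1_card -[k.+2](_ : r + (k - r).+2 = _) -?card_lead_trail //; last first.
  by have := ltn_ord r; lia.
apply: eq_card => A; rewrite unfold_in /= !inE -val_eqE /=; have := ltn_ord r.
case: (boolP (lead A + trail A == k)) => [/eqP sum_k|ne_k] lt_rk /=.
  rewrite inordK; last by lia.
  by apply/idP/andP => [/eqP lr|[/eqP lr /eqP tr]]; [split; apply/eqP|apply/eqP]; lia.
apply/esym/negbTE; apply: contra ne_k => /andP[/eqP lr /eqP tr]; apply/eqP; lia.
Qed.

Lemma grassmannian1 n : grassmannian (1%g : 'S_n).
Proof.
rewrite /grassmannian /ndes (_ : descents 1 = set0) ?cards0 //.
apply/setP => i; rewrite in_set0; apply/negP => /descentsP[j ji].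
by rewrite !perm1 ltnNge ji leqnSn.
Qed.

Lemma nfix1 n : nfix (1%g : 'S_n) = n.
Proof.
rewrite /nfix -[RHS](card_ord n) -cardsT; apply: eq_card => i.
by rewrite !inE perm1 eqxx.
Qed.

Lemma nfix_neq1 n (s : 'S_n) : s != 1%g -> nfix s + 2 <= n.
Proof.
move=> ne1; have [x moved_x] : exists x, s x != x.
  apply/existsP; apply: contraR ne1 => /existsPn fixed.
  by apply/eqP/permP => x; rewrite perm1; apply/eqP/negPn.
have moved_sx : s (s x) != s x by rewrite (inj_eq perm_inj).
have : [set x; s x] \subset ~: [set i | s i == i].
  by apply/subsetP => y; rewrite !inE => /orP[]/eqP->.
move/subset_leq_card; rewrite cards2 eq_sym moved_x -(leq_add2l (nfix s)).
by rewrite /nfix cardsC card_ord.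
Qed.

Lemma card_nontrivial_shuffles n k :
  #|[set A : {set 'I_n} | (shuffle A != 1%g) && (lead A + trail A == k)]| =
    if k.+2 <= n then k.+1 * 2 ^ (n - k.+2) else 0.
Proof.
case: (leqP k.+2 n) => [room|too_big].
  rewrite -card_lead_add_trail //; apply: eq_card => A; rewrite !inE.
  case: eqP => //= shuffle1; apply/esym/negbTE.
  by have := nfix_shuffle A; rewrite shuffle1 nfix1 => <-; apply/eqP; lia.
apply/eqP; rewrite cards_eq0; apply/eqP/setP => A; rewrite !inE.
apply/negbTE/negP => /andP[/nfix_neq1 + /eqP eq_k]; rewrite nfix_shuffle eq_k; lia.
Qed.

Lemma nontrivial_grassmannian n k :
  [set s : 'S_n | grassmannian s && (nfix s == k)] :\ 1%g =
    @shuffle n @: [set A : {set 'I_n} | (shuffle A != 1%g) && (lead A + trail A == k)].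
Proof.
apply/setP => s; rewrite !inE; apply/andP/imsetP => [[ne1 /andP[grass_s fix_k]]|].
  have [A eq_s] := grassmannian_shuffleP grass_s.
  by exists A; rewrite // inE -nfix_shuffle -eq_s ne1 fix_k.
case=> A; rewrite inE => /andP[ne1 fix_k] ->.
by rewrite ne1 grassmannian_shuffle nfix_shuffle.
Qed.

Theorem mainTheorem1 (n k : nat) (hn : 1 <= n) (hk : k <= n) :
  grass_fix_count n k =
    (if k == n then 1
     else if k == n.-1 then 0
     else k.+1 * 2 ^ (n - k - 2)).
Proof.
rewrite /grass_fix_count (cardsD1 1%g) inE grassmannian1 nfix1 eq_sym /=.
rewrite nontrivial_grassmannian card_in_imset; last first.
  by move=> A B; rewrite inE => /andP[ne1 _] _; apply: shuffle_inj.
rewrite card_nontrivial_shuffles -subnDA addn2.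
case: (eqVneq k n) => [->|ne_kn] /=; first by rewrite ltnNge leqnSn.
by case: (eqVneq k n.-1) => ? /=; case: ltnP; lia.
Qed.
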